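(* Let $\mathbf{B}$ be a unital ring and $F\colon\mathfrak{XMod}\to\mathfrak{Mod}$ a module functor. Then $F$ is polynomial of degree at most $n$ if and only if the additive functor $\Phi(F)\colon\mathfrak{Laby}\to\mathfrak{Mod}$ vanishes on all finite sets with more than $n$ elements; equivalently, if and only if $\Phi(F)$ vanishes on all mazes with more than $n$ passages.
   Context: $\mathfrak{XMod}$: finitely generated free right $\mathbf{B}$-modules with right-module homomorphisms; $\mathfrak{Mod}$: all $\mathbf{B}$-modules; a module functor is any (not necessarily additive) functor $\mathfrak{XMod}\to\mathfrak{Mod}$. For homomorphisms $\alpha_1,\dots,\alpha_k$ with common source and target, $F(\alpha_1\diamond\cdots\diamond\alpha_k)=\sum_{I\subseteq\{1,\dots,k\}}(-1)^{k-|I|}F(\sum_{i\in I}\alpha_i)$. $F$ is polynomial of degree at most $n$ if $F(\alpha_1\diamond\cdots\diamond\alpha_{n+1})=0$ for all homomorphisms $\alpha_1,\dots,\alpha_{n+1}\colon M\to N$ and all $M,N$. For a finite set $X$, $\mathbf{B}^X$ has basis $(e_x)$; $b\sigma_{yx}\colon\mathbf{B}^X\to\mathbf{B}^Y$ is the map $e_x\mapsto e_yb$, $e_{x'}\mapsto 0$ ($x'\ne x$); $\pi_x=\sigma_{xx}$; $\mathrm{cr}_XF(\mathbf{B})=\operatorname{Im}F(\diamond_{x\in X}\pi_x)$. A passage $p\colon x\to y$ between elements of finite sets carries a label $\overline p\in\mathbf{B}$. A maze $P\colon X\to Y$ is a finite multi-set of passages from elements of $X$ to elements of $Y$ such that each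 element of $X$ is a source and each element of $Y$ a target of some passage. $\mathfrak{Laby}$ is the category whose objects are formal finite direct sums of finite sets and whose hom-group $\mathfrak{Laby}(X,Y)$ is generated by mazes $X\to Y$ modulo the relations $P\cup\{x\xrightarrow{0}y\}=0$ and $P\cup\{x\xrightarrow{a+b}y\}=P\cup\{x\xrightarrow{a}y\}+P\cup\{x\xrightarrow{b}y\}+P\cup\{x\xrightarrow{a}y,x\xrightarrow{b}y\}$ (for multi-sets of passages $P$), with composition $P\circ Q=\sum_{U\sqsubseteq P\boxtimes Q}U$, where $U$ ranges over sub-multi-sets of the multi-set of composable pairs $(p,q)$ ($q\colon x\to y\in Q$, $p\colon y\to z\in P$) using every passage occurrence of $P$ and of $Q$, and $U$ is read as the maze with passages $x\xrightarrow{\overline p\,\overline q}z$. $\Phi(F)\colon\mathfrak{Laby}\to\mathfrak{Mod}$ is the additive functor with $\Phi(F)(X)=\mathrm{cr}_XF(\mathbf{B})$ and $\Phi(F)(P)$ the restriction of $F(\diamond_{p\in P}\overline p\sigma_{y_px_p})$ (product over passage occurrences $p\colon x_p\to y_p$) to $\mathrm{cr}_XF(\mathbf{B})\to\mathrm{cr}_YF(\mathbf{B})$. *)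

From HB Require Import structures.
From mathcomp Require Import all_boot all_order all_algebra.
Set Implicit Arguments. Unset Strict Implicit. Unset Printing Implicit Defensive.
Import GRing.Theory.
Local Open Scope ring_scope.

(* XMod is modelled by its skeleton: the objects are the standard free right
   B-modules B^m (m : nat), i.e. column vectors 'cV[B]_m, and a right-module
   homomorphism B^m -> B^k is a matrix A : 'M[B]_(k, m) acting by v |-> A *m v
   (composition = matrix product, sum of homomorphisms = sum of matrices).
   Right B-modules are left modules over the converse ring B^c. *)

Record moduleFunctor (B : pzRingType) := ModuleFunctor {
  Fobj : nat -> lmodType B^c;
  Fmap : forall m k, 'M[B]_(k, m) -> {linear Fobj m -> Fobj k};
  Fmap_id : forall m (v : Fobj m), Fmap (1%:M : 'M[B]_m) v = v;
  Fmap_comp : forall m k l (A : 'M[B]_(l, k)) (C : 'M[B]_(k, m)) (v : Fobj m),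
      Fmap (A *m C) v = Fmap A (Fmap C v)
}.

Section Defs.
Variable B : pzRingType.
Variable F : moduleFunctor B.

Definition diam m k (s : seq 'M[B]_(k, m)) (v : Fobj F m) : Fobj F k :=
  \sum_(I : {set 'I_(size s)})
     ((-1) ^+ (size s - #|I|)%N : B^c) *: Fmap F (\sum_(i in I) s`_i) v.

Definition polynomial_deg (n : nat) : Prop :=
  forall m k (s : seq 'M[B]_(k, m)), size s = n.+1 ->
    forall v : Fobj F m, diam s v = 0.

Definition bsigma m k (b : B) (y : 'I_k) (x : 'I_m) : 'M[B]_(k, m) :=
  b *: delta_mx y x.

Definition proj m (x : 'I_m) : 'M[B]_m := bsigma 1 x x.

Definition cross_effect m (w : Fobj F m) : Prop :=
  exists v : Fobj F m, w = diam [seq proj x | x <- enum 'I_m] v.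

Definition Phi_obj_vanishes m : Prop :=
  forall w : Fobj F m, cross_effect w -> w = 0.

(* A passage x -> y with label b is (x, y, b); a maze X -> Y is a finite
   multiset of passages (a list; order is irrelevant) such that every element
   of X is a source and every element of Y a target. *)
Definition passage m k := ('I_m * 'I_k * B)%type.

Definition is_maze m k (P : seq (passage m k)) : Prop :=
  (forall x : 'I_m, exists2 p, p \in P & p.1.1 = x) /\
  (forall y : 'I_k, exists2 p, p \in P & p.1.2 = y).

Definition Phi_maze m k (P : seq (passage m k)) (w : Fobj F m) : Fobj F k :=
  diam [seq bsigma p.2 p.1.2 p.1.1 | p <- P] w.

Definition Phi_maze_vanishes m k (P : seq (passage m k)) : Prop :=
  forall w : Fobj F m, cross_effect w -> Phi_maze P w = 0.

End Defs.

(* The identity F((a + b) <> s) = F(a <> b <> s) + F(a <> s) + F(b <> s) lets the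
   vanishing of all cross differences of length n + 1 propagate to every length
   > n; mazes and the images F(<>_x pi_x) defining cross-effects are such cross
   differences, so a polynomial functor of degree <= n satisfies both vanishing
   conditions.  Conversely, the same identity reduces any cross difference to
   cross differences of rank-one maps c_j r_j, and k of those factor through
   B^k as C o pi_j o R, so their cross difference is F(C) applied to an element
   of cr_k F(B).  Finally F(<>_x pi_x) is idempotent, so the identity maze on X
   acts as the identity on cr_X F(B); vanishing on mazes thus implies vanishing
   on finite sets. *)

From mathcomp Require Import all_boot all_algebra zify.

Set Implicit Arguments. Unset Strict Implicit. Unset Printing Implicit Defensive.
Import GRing.Theory.
Local Open Scope ring_scope.

Lemma subrACA (V : zmodType) (a b c d : V) : (a - b) - (c - d) = (a - c) - (b - d).
Proof. by rewrite !opprB addrACA [RHS]addrACA [- c + _]addrC. Qed.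

Lemma big_set_ord_recl (R : Type) (idx : R) (op : Monoid.com_law idx) n
    (G : {set 'I_n.+1} -> R) :
  \big[op/idx]_(I : {set 'I_n.+1}) G I =
  op (\big[op/idx]_(J : {set 'I_n}) G (lift ord0 @: J))
     (\big[op/idx]_(J : {set 'I_n}) G (ord0 |: lift ord0 @: J)).
Proof.
have liftJ (J : {set 'I_n}) j : (lift ord0 j \in lift ord0 @: J) = (j \in J).
  exact: (mem_imset _ _ (@lift_inj _ ord0)).
have ord0_liftJ (J : {set 'I_n}) : ord0 \notin lift ord0 @: J.
  by apply/imsetP => -[j _ /eqP]; rewrite (negbTE (neq_lift _ _)).
pose unlift_set (I : {set 'I_n.+1}) : {set 'I_n} := [set j | lift ord0 j \in I].
rewrite (bigID (fun I : {set 'I_n.+1} => ord0 \in I)) /= Monoid.mulmC; congr (op _ _).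
- rewrite (reindex_onto (fun J : {set 'I_n} => lift ord0 @: J) unlift_set) => [|I I0].
    apply: eq_bigl => J /=; rewrite (negbTE (ord0_liftJ J)) /=.
    by apply/eqP/setP => j; rewrite inE liftJ.
  apply/setP => x; case: (unliftP ord0 x) => [j ->|->]; first by rewrite liftJ inE.
  by rewrite (negbTE I0) (negbTE (ord0_liftJ _)).
- rewrite (reindex_onto (fun J : {set 'I_n} => ord0 |: lift ord0 @: J) unlift_set) => [|I I0].
    apply: eq_bigl => J; rewrite setU11 /=; apply/eqP/setP => j.
    by rewrite inE in_setU1 eq_sym (negbTE (neq_lift _ _)) liftJ.
  apply/setP => x; rewrite in_setU1; case: (unliftP ord0 x) => [j ->|->].
    by rewrite eq_sym (negbTE (neq_lift _ _)) liftJ inE.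
  by rewrite eqxx I0.
Qed.

Section Diamond.
Variables (B : pzRingType) (F : moduleFunctor B).

(* [diam_at c s v] is F(c + alpha_1 <> ... <> alpha_k) v: the cross difference
   of F based at c rather than at 0. *)
Fixpoint diam_at m k (c : 'M[B]_(k, m)) (s : seq 'M[B]_(k, m)) (v : Fobj F m)
    : Fobj F k :=
  if s is a :: s' then diam_at (c + a) s' v - diam_at c s' v else Fmap F c v.

Lemma diam_atE m k c (s : seq 'M[B]_(k, m)) v :
  diam_at c s v = \sum_(I : {set 'I_(size s)})
     ((-1) ^+ (size s - #|I|)%N : B^c) *: Fmap F (c + \sum_(i in I) s`_i) v.
Proof.
elim: s c => [|a s IH] c /=.
  rewrite (big_pred1 set0) => [|I]; last by apply/esym/eqP/setP => -[].
  by rewrite big_set0 addr0 cards0 expr0 scale1r.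
have lift_inj_in (J : {set 'I_(size s)}) : {in J &, injective (lift ord0)}.
  by move=> x y _ _; apply: lift_inj.
rewrite !IH big_set_ord_recl addrC; congr (_ + _).
  rewrite -sumrN; apply: eq_bigr => J _.
  rewrite card_imset ?big_imset //=; last exact: lift_inj.
  have leJ : (#|J| <= size s)%N by rewrite -[X in (_ <= X)%N]card_ord max_card.
  by rewrite subSn // exprS mulN1r scaleNr.
apply: eq_bigr => J _.
have J0 : ord0 \notin lift ord0 @: J.
  by apply/imsetP => -[j _ /eqP]; rewrite (negbTE (neq_lift _ _)).
rewrite cardsU1 J0 card_imset; last exact: lift_inj.
by rewrite big_setU1 //= big_imset //= addrA.
Qed.

Lemma diamE m k (s : seq 'M[B]_(k, m)) (v : Fobj F m) : diam s v = diam_at 0 s v.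
Proof. by rewrite diam_atE; apply: eq_bigr => I _; rewrite add0r. Qed.

Lemma diam_at_Fmap m k m' c (s : seq 'M[B]_(k, m)) (g : 'M[B]_(m, m')) v :
  diam_at c s (Fmap F g v) = diam_at (c *m g) [seq a *m g | a <- s] v.
Proof.
elim: s c => [|a s IH] c /=; first by rewrite Fmap_comp.
by rewrite !IH mulmxDl.
Qed.

Lemma Fmap_diam_at m k k' c (s : seq 'M[B]_(k, m)) (b : 'M[B]_(k', k)) v :
  Fmap F b (diam_at c s v) = diam_at (b *m c) [seq b *m a | a <- s] v.
Proof.
elim: s c => [|a s IH] c /=; first by rewrite Fmap_comp.
by rewrite linearB !IH mulmxDr.
Qed.

Lemma diam_atB m k c (s : seq 'M[B]_(k, m)) v w :
  diam_at c s (v - w) = diam_at c s v - diam_at c s w.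
Proof.
elim: s c => [|a s IH] c /=; first exact: linearB.
by rewrite !IH subrACA.
Qed.

Lemma diam_at_rcons m k c (s : seq 'M[B]_(k, m)) a v :
  diam_at c (rcons s a) v = diam_at c (a :: s) v.
Proof.
elim: s c => [|a' s IH] c //=.
by rewrite !IH /= subrACA -!addrA [a' + a]addrC.
Qed.

Lemma diam_at_catC m k c (s t : seq 'M[B]_(k, m)) v :
  diam_at c (s ++ t) v = diam_at c (t ++ s) v.
Proof.
elim: s t => [|a s IH] t; first by rewrite cats0.
by rewrite cat_cons -diam_at_rcons rcons_cat IH cat_rcons.
Qed.

Lemma diam_at_mem0 m k c (s : seq 'M[B]_(k, m)) v : 0 \in s -> diam_at c s v = 0.
Proof. by case/splitPr=> s1 s2; rewrite diam_at_catC /= addr0 subrr. Qed.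

Lemma diam_at_consD m k c (a b : 'M[B]_(k, m)) s v :
  diam_at c (a + b :: s) v =
  diam_at c [:: a, b & s] v + diam_at c (a :: s) v + diam_at c (b :: s) v.
Proof.
rewrite /= addrA [c + a + b]addrAC.
set X := diam_at (c + b + a) s v; set Ya := diam_at (c + a) s v.
set Yb := diam_at (c + b) s v; set Z := diam_at c s v.
rewrite opprB !addrA (addrAC _ (- Yb) Ya) (addrAC (X - Ya) Z Ya) subrK.
by rewrite (addrAC (X + Z) (- Yb) (- Z)) addrK subrK.
Qed.

End Diamond.

Section PolynomialDegree.
Variables (B : pzRingType) (F : moduleFunctor B) (n : nat).

Lemma polynomial_deg_diam : polynomial_deg F n ->
  forall m k (s : seq 'M[B]_(k, m)) (v : Fobj F m), (n < size s)%N -> diam s v = 0.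
Proof.
move=> Fn m k s v; rewrite diamE.
have [N] := ubnP (size s); elim: N s => // N IH s ltsN lt_ns.
have [/Fn/(_ v)|neq_s] := eqVneq (size s) n.+1; first by rewrite diamE.
case: s ltsN lt_ns neq_s => [|a [|b s]] ltsN lt_ns neq_s;
  rewrite /= in ltsN lt_ns neq_s; [lia | lia |].
have IHs (t : seq 'M[B]_(k, m)) : size t = (size s).+1 -> diam_at 0 t v = 0.
  by move=> st; apply: IH; rewrite st /=; lia.
have := diam_at_consD 0 a b s v.
by rewrite [LHS]IHs ?[diam_at _ (a :: s) v]IHs ?[diam_at _ (b :: s) v]IHs // !addr0 => <-.
Qed.

Lemma singletons_flatten (T : Type) (L : seq (seq T)) :
  all (fun l => size l == 1%N) L -> L = [seq [:: x] | x <- flatten L].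
Proof.
by elim: L => //= -[|x [|y l]] L IHL //= /IHL {1}->.
Qed.

(* Induction on the number of extra summands; [diam_at_consD] splits off one. *)
Lemma diam_sum_vanish (T : eqType) m k (f : T -> 'M[B]_(k, m)) (v : Fobj F m) :
  (forall t : seq T, (n < size t)%N -> diam [seq f x | x <- t] v = 0) ->
  forall L : seq (seq T), (n < size L)%N ->
    diam [seq \sum_(x <- l) f x | l <- L] v = 0.
Proof.
move=> f_vanish L; rewrite diamE.
have [N] := ubnP (sumn [seq (size l).-1 | l <- L]); elim: N L => // N IH L.
have [|/hasPn short] := boolP (has (fun l : seq T => 1 < size l)%N L).
  case/hasP=> l0 L_l0 long_l0; case/splitPr: L_l0 => L1 L2.
  case: l0 long_l0 => [|x [|y l]] //= _.
  rewrite !map_cat sumn_cat size_cat /= => ltN lt_nL.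
  rewrite diam_at_catC cat_cons big_cons diam_at_consD -map_cat.
  have fx : f x = \sum_(z <- [:: x]) f z by rewrite big_seq1.
  rewrite fx (IH [:: [:: x], y :: l & L2 ++ L1]) ?(IH [:: [:: x] & L2 ++ L1])
    ?(IH [:: y :: l & L2 ++ L1]) ?addr0 //= ?map_cat ?sumn_cat ?size_cat; lia.
move=> _ lt_nL.
have [nilL | nonnilL] := boolP ([::] \in L).
  by apply: diam_at_mem0; apply/mapP; exists [::]; rewrite ?big_nil.
have singleL : all (fun l => size l == 1%N) L.
  apply/allP => -[|x [|y l]] Ll /=; [by rewrite Ll in nonnilL | by [] |].
  by have := short _ Ll.
rewrite (singletons_flatten singleL) -map_comp -diamE.
under eq_map do rewrite /= big_seq1.
by apply: f_vanish; move: lt_nL; rewrite {1}(singletons_flatten singleL) size_map.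
Qed.

End PolynomialDegree.

Section CrossEffects.
Variables (B : pzRingType) (F : moduleFunctor B) (n : nat).
Hypothesis cross_effects_vanish : forall N, (n < N)%N -> Phi_obj_vanishes F N.

Lemma diam_rank_one m k (t : seq ('cV[B]_k * 'rV[B]_m)) (v : Fobj F m) :
  (n < size t)%N -> diam [seq p.1 *m p.2 | p <- t] v = 0.
Proof.
move=> lt_nt; set N := size t; pose d := (0 : 'cV[B]_k, 0 : 'rV[B]_m).
pose C : 'M[B]_(k, N) := \matrix_(y, j) (nth d t j).1 y 0.
pose R : 'M[B]_(N, m) := \matrix_(j, x) (nth d t j).2 0 x.
have factor_t : [seq p.1 *m p.2 | p <- t] = [seq C *m (proj B j *m R) | j <- enum 'I_N].
  rewrite -{1}(mkseq_nth d t) /mkseq -val_enum_ord -!map_comp; apply: eq_map => j /=.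
  rewrite /proj /bsigma scale1r -(mul_delta_mx (0 : 'I_1)) -mulmxA (mulmxA C) -colE -rowE.
  by congr (_ *m _); apply/matrixP => i i'; rewrite !mxE ?(ord1 i) ?(ord1 i').
have := cross_effects_vanish lt_nt (ex_intro _ (Fmap F R v) erefl).
rewrite !diamE diam_at_Fmap => /(congr1 (Fmap F C)).
rewrite Fmap_diam_at linear0 mul0mx mulmx0 -!map_comp factor_t => <-.
by congr diam_at; rewrite -map_comp.
Qed.

Lemma cross_effects_polynomial_deg : polynomial_deg F n.
Proof.
move=> m k s sz_s v.
pose rank_ones (a : 'M[B]_(k, m)) :=
  [seq (col j a, delta_mx 0 j : 'rV[B]_m) | j <- enum 'I_m].
have -> : s = [seq \sum_(p <- l) p.1 *m p.2 | l <- map rank_ones s].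
  rewrite -map_comp -[LHS]map_id; apply: eq_map => a /=.
  rewrite big_map big_enum /=.
  under eq_bigr do rewrite colE -mulmxA mul_delta_mx.
  by rewrite -mulmx_sumr -mx1_sum_delta mulmx1.
apply: diam_sum_vanish => [t|]; first exact: diam_rank_one.
by rewrite !size_map sz_s.
Qed.

End CrossEffects.

Section Projections.
Variables (B : pzRingType) (F : moduleFunctor B) (m : nat).

Definition projs (K : {set 'I_m}) : 'M[B]_m := \sum_(x in K) proj B x.

Local Notation diam_proj v := (diam_at 0 [seq proj B x | x <- enum 'I_m] (v : Fobj F m)).

Lemma mul_proj (x y : 'I_m) : proj B y *m proj B x = proj B y *+ (y == x).
Proof. by rewrite /proj /bsigma !scale1r mul_delta_mx_cond; case: eqP => [->|]. Qed.

Lemma mul_proj_projs y (K : {set 'I_m}) : proj B y *m projs K = proj B y *+ (y \in K).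
Proof.
rewrite /projs mulmx_sumr; under eq_bigr do rewrite mul_proj mulrb.
rewrite -big_mkcondr; have [yK | yNK] := boolP (y \in K).
  by rewrite (big_pred1 y) // => x /=; rewrite eq_sym; case: eqP => [->|]; rewrite ?yK ?andbF.
by rewrite big_pred0 // => x; case: eqP => [<-|]; rewrite ?(negbTE yNK) ?andbF.
Qed.

Lemma projsT : projs setT = 1%:M.
Proof.
rewrite /projs mx1_sum_delta; apply: eq_big => [x | x _]; first by rewrite inE.
by rewrite /proj /bsigma scale1r.
Qed.

Lemma diam_proj_Fmap_projs (K : {set 'I_m}) v :
  diam_proj (Fmap F (projs K) v) = if K == setT then diam_proj v else 0.
Proof.
rewrite diam_at_Fmap mul0mx -map_comp; have [-> | ] := eqVneq K setT.
  by rewrite projsT; congr diam_at; apply: eq_map => x; apply: mulmx1.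
rewrite -subTset => /subsetPn[y _ yNK]; apply: diam_at_mem0; apply/mapP.
by exists y; rewrite ?mem_enum //= mul_proj_projs (negbTE yNK).
Qed.

Lemma diam_proj_diam_at_projs (l : seq 'I_m) (K : {set 'I_m}) v :
  uniq l -> {in l, forall y, y \notin K} ->
  diam_proj (diam_at (projs K) [seq proj B x | x <- l] v) =
  if K :|: [set:: l] == setT then diam_proj v else 0.
Proof.
elim: l K => [|x l IHl] K /=; first by rewrite set_nil setU0 diam_proj_Fmap_projs.
case/andP=> xNl ul lNK; have xNK : x \notin K by apply: lNK; rewrite mem_head.
have projsU1 : projs K + proj B x = projs (x |: K) by rewrite /projs big_setU1 //= addrC.
rewrite diam_atB projsU1 !IHl // => [|y ly|y ly].
- have -> : (K :|: [set:: l] == setT) = false.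
    apply/negP => /eqP/setP/(_ x); rewrite !inE.
    by rewrite (negbTE xNK) (negbTE xNl).
  by rewrite set_cons setUCA setUA subr0.
- by apply: lNK; rewrite inE ly orbT.
rewrite in_setU1 negb_or lNK ?inE ?ly ?orbT // andbT.
by apply: contraNneq xNl => <-.
Qed.

Lemma diam_proj_idem v : diam_proj (diam_proj v) = diam_proj v.
Proof.
have := @diam_proj_diam_at_projs (enum 'I_m) set0 v (enum_uniq _).
have -> : set0 :|: [set:: enum 'I_m] = setT by apply/setP => x; rewrite !inE mem_enum.
by rewrite /projs big_set0 eqxx => ->// y; rewrite inE.
Qed.

Lemma cross_effect_diam_proj (w : Fobj F m) :
  cross_effect w -> diam [seq proj B x | x <- enum 'I_m] w = w.
Proof. by case=> v ->; rewrite !diamE diam_proj_idem. Qed.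

End Projections.

Theorem mainTheorem2 (B : pzRingType) (F : moduleFunctor B) (n : nat) :
  (polynomial_deg F n <-> (forall m : nat, (n < m)%N -> Phi_obj_vanishes F m)) /\
  (polynomial_deg F n <->
     (forall (m k : nat) (P : seq (passage B m k)),
        is_maze P -> (n < size P)%N -> Phi_maze_vanishes F P)).
Proof.
have objects : polynomial_deg F n <-> (forall m, (n < m)%N -> Phi_obj_vanishes F m).
  split=> [Fn m lt_nm w [v ->] | ]; last exact: cross_effects_polynomial_deg.
  by apply: (polynomial_deg_diam Fn); rewrite size_map size_enum_ord.
split=> //; split=> [Fn m k P _ lt_nP w _ | mazes_vanish].
  by apply: (polynomial_deg_diam Fn); rewrite size_map.
apply/objects => m lt_nm w w_cr.
pose id_maze : seq (passage B m m) := [seq (x, x, 1) | x <- enum 'I_m].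
have is_maze_id : is_maze id_maze by split=> x; exists (x, x, 1); rewrite ?map_f ?mem_enum.
have := mazes_vanish _ _ _ is_maze_id; rewrite size_map size_enum_ord.
move=> /(_ lt_nm w w_cr); rewrite /Phi_maze -map_comp.
by rewrite (cross_effect_diam_proj w_cr).
Qed.
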